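(* The following statement is false: for all integers $m>a\geq0$ and $n>b\geq0$, an erasure pattern $\mathcal{E}\subseteq[m]\times[n]$ is correctable in the topology $T_{m\times n}(a,b,0)$ if and only if it is regular.
   Context: Positions of vectors in $\mathbb{F}^{mn}$ are identified with $[m]\times[n]$, $[k]=\{1,\dots,k\}$. For linear codes $\mathcal{C}_1\subseteq\mathbb{F}^m,\mathcal{C}_2\subseteq\mathbb{F}^n$, $\mathcal{C}_1\otimes\mathcal{C}_2$ is the row span of the Kronecker product of their generator matrices. A code for the topology $T_{m\times n}(a,b,0)$ is a linear code over a finite field $\mathbb{F}$ whose parity-check matrix is a parity-check matrix of $\mathcal{C}_{\mathsf{col}}\otimes\mathcal{C}_{\mathsf{row}}$, where $\mathcal{C}_{\mathsf{col}}$ is a linear $[m,\geq m-a]$ code and $\mathcal{C}_{\mathsf{row}}$ a linear $[n,\geq n-b]$ code over $\mathbb{F}$; $\mathbb{C}_{m\times n}(a,b,0)$ is the set of these codes (over any finite field). A code corrects an erasure pattern $\mathcal{E}$ if no two distinct codewords agree on all positions outside $\mathcal{E}$; $\mathcal{E}$ is correctable in $T_{m\times n}(a,b,0)$ if some code in $\mathbb{C}_{m\times n}(a,b,0)$ corrects it. An erasure pattern $\mathcal{E}\subseteq[m]\times[n]$ is regular if for all $\mathcal{U}\subseteq[m]$ with $|\mathcal{U}|=u\geq a$ and all $\mathcal{V}\subseteq[n]$ with $|\mathcal{V}|=v\geq b$ one has $|\mathcal{E}\cap(\mathcal{U}\times\mathcal{V})|\leq va+ub-ab$. *)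

From mathcomp Require Import all_boot all_order all_algebra all_field.
Set Implicit Arguments. Unset Strict Implicit. Unset Printing Implicit Defensive.
Import GRing.Theory.
Local Open Scope ring_scope.

(* Vectors of F^{mn} are functions on positions [m] x [n] (0-based ordinals). *)

Definition kron (F : fieldType) (k1 k2 m n : nat)
  (G1 : 'M[F]_(k1, m)) (G2 : 'M[F]_(k2, n))
  (r : 'I_k1 * 'I_k2) (p : 'I_m * 'I_n) : F :=
  G1 r.1 p.1 * G2 r.2 p.2.

Definition in_tensor_code (F : fieldType) (k1 k2 m n : nat)
  (G1 : 'M[F]_(k1, m)) (G2 : 'M[F]_(k2, n)) (c : 'I_m * 'I_n -> F) : Prop :=
  exists x : 'I_k1 * 'I_k2 -> F,
    forall p, c p = \sum_(r : 'I_k1 * 'I_k2) x r * kron G1 G2 r p.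

Definition corrects (F : fieldType) (m n : nat)
  (code : ('I_m * 'I_n -> F) -> Prop) (E : {set 'I_m * 'I_n}) : Prop :=
  forall c1 c2, code c1 -> code c2 ->
    (forall p, p \notin E -> c1 p = c2 p) -> forall p, c1 p = c2 p.

(* E is correctable in T_{m x n}(a,b,0): some finite field F, some linear
   [m, >= m-a] code C_col (row span of G1) and [n, >= n-b] code C_row
   (row span of G2) such that C_col (x) C_row corrects E. *)
Definition correctable (m n a b : nat) (E : {set 'I_m * 'I_n}) : Prop :=
  exists (F : finFieldType) (k1 k2 : nat)
         (G1 : 'M[F]_(k1, m)) (G2 : 'M[F]_(k2, n)),
    (m - a <= \rank G1)%N /\ (n - b <= \rank G2)%N /\
    corrects (in_tensor_code G1 G2) E.

Definition regular (m n a b : nat) (E : {set 'I_m * 'I_n}) : Prop :=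
  forall (U : {set 'I_m}) (V : {set 'I_n}),
    (a <= #|U|)%N -> (b <= #|V|)%N ->
    (#|E :&: setX U V| <= #|V| * a + #|U| * b - a * b)%N.

From mathcomp Require Import all_boot all_order all_algebra all_field.
From mathcomp Require Import zify.
Set Implicit Arguments. Unset Strict Implicit. Unset Printing Implicit Defensive.
Import GRing.Theory.
Local Open Scope ring_scope.

(* Positions are 0-based. Take a = b = 2 and let E be the complement in
   [5] x [5] of S = {0,1} x {1,2} U {2,3} x {0,3} U {(4,4)}; regularity of E
   is a finite check. Since C_col and C_row have dimension at least 3, they
   contain nonzero words z, u and v, w vanishing on {0,1}, {2,3} and {0,3},
   {1,2} respectively. Then z (x) v and u (x) w vanish on S except possibly
   at (4,4). If the tensor code corrected E, every codeword vanishing on S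
   would be zero: so both products are nonzero at (4,4), and the combination
   of them that also vanishes there is zero. Its column 4 forces u to vanish
   on {0,1}, and then u (x) x, for a nonzero x in C_row with x_4 = 0, is a
   nonzero codeword vanishing on S. *)

Definition outer (F : fieldType) m n (u : 'rV[F]_m) (v : 'rV[F]_n)
  (p : 'I_m * 'I_n) : F :=
  u 0 p.1 * v 0 p.2.

Lemma outerE (F : fieldType) m n (u : 'rV[F]_m) (v : 'rV[F]_n) i j :
  outer u v (i, j) = u 0 i * v 0 j.
Proof. by []. Qed.

Lemma outer_eq0 (F : fieldType) m n (u : 'rV[F]_m) (v : 'rV[F]_n) :
  (forall p, outer u v p = 0) -> u = 0 \/ v = 0.
Proof.
move=> uv0; have [|/rV0Pn[i ui]] := eqVneq u 0; [by left | right].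
apply/rowP => j; rewrite mxE; apply/eqP.
by have /eqP := uv0 (i, j); rewrite mulf_eq0 (negbTE ui).
Qed.

Lemma outer_eq0_setX (F : fieldType) m n (u : 'rV[F]_m) (v : 'rV[F]_n)
    (A : {set 'I_m}) (B : {set 'I_n}) :
  {in A, forall i, u 0 i = 0} \/ {in B, forall j, v 0 j = 0} ->
  {in setX A B, forall p, outer u v p = 0}.
Proof.
by move=> [u0|v0] [i j] /setXP[iA jB]; rewrite outerE ?u0 ?v0 ?mul0r ?mulr0.
Qed.

Lemma exists_codeword_vanishing (F : fieldType) k m (G : 'M[F]_(k, m))
    (I : {set 'I_m}) :
  (#|I| < \rank G)%N ->
  exists u : 'rV_m, [/\ (u <= G)%MS, u != 0 & {in I, forall i, u 0 i = 0}].
Proof.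
move=> rkI.
(* P reads off the coordinates in I, hence
   \rank (G :&: kermx P) >= \rank G - \rank P >= \rank G - #|I| > 0. *)
pose P : 'M[F]_(m, #|I|) := colsub enum_val 1%:M.
pose u := nz_row (G :&: kermx P)%MS.
have uGP : (u <= G :&: kermx P)%MS := nz_row_sub _.
exists u; split.
- exact: submx_trans uGP (capmxSl _ _).
- rewrite nz_row_eq0 -mxrank_eq0.
  have := mxrank_sum_cap G (kermx P); rewrite mxrank_ker.
  have := rank_leq_col (G + kermx P)%MS; have := rank_leq_col P.
  have := rank_leq_row P; lia.
- move=> i iI; have /sub_kermxP/rowP/(_ (enum_rank_in iI i)) :=
    submx_trans uGP (capmxSr _ _).
  by rewrite mulmx_colsub mulmx1 !mxE enum_rankK_in.
Qed.

Lemma corrects_codeword_eq0 (F : fieldType) m n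
    (code : ('I_m * 'I_n -> F) -> Prop) (E : {set 'I_m * 'I_n}) c :
  code (fun=> 0) -> corrects code E -> code c ->
  {in ~: E, forall p, c p = 0} -> forall p, c p = 0.
Proof.
move=> code0 corrE codec c0; apply: corrE codec code0 _ => p pE.
by apply: c0; rewrite inE.
Qed.

Section TensorCode.
Variables (F : fieldType) (k1 k2 m n : nat).
Variables (G1 : 'M[F]_(k1, m)) (G2 : 'M[F]_(k2, n)).

Lemma in_tensor_code0 : in_tensor_code G1 G2 (fun=> 0).
Proof. by exists (fun=> 0) => p; rewrite big1 // => r _; rewrite mul0r. Qed.

Lemma in_tensor_code_comb c1 c2 (a b : F) :
  in_tensor_code G1 G2 c1 -> in_tensor_code G1 G2 c2 ->
  in_tensor_code G1 G2 (fun p => a * c1 p + b * c2 p).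
Proof.
move=> [x1 c1E] [x2 c2E]; exists (fun r => a * x1 r + b * x2 r) => p.
rewrite c1E c2E !mulr_sumr -big_split /=; apply: eq_bigr => r _.
by rewrite mulrDl !mulrA.
Qed.

Lemma in_tensor_code_outer u v :
  (u <= G1)%MS -> (v <= G2)%MS -> in_tensor_code G1 G2 (outer u v).
Proof.
move=> /submxP[y1 ->] /submxP[y2 ->].
exists (fun r => y1 0 r.1 * y2 0 r.2) => p.
rewrite /outer !mxE big_distrlr /= pair_big /=; apply: eq_bigr => r _.
by rewrite /kron mulrACA.
Qed.

End TensorCode.

Definition o0 : 'I_5 := @Ordinal 5 0 isT.
Definition o1 : 'I_5 := @Ordinal 5 1 isT.
Definition o2 : 'I_5 := @Ordinal 5 2 isT.
Definition o3 : 'I_5 := @Ordinal 5 3 isT.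
Definition o4 : 'I_5 := @Ordinal 5 4 isT.

Definition blocks : {set 'I_5 * 'I_5} :=
  setX [set o0; o1] [set o1; o2] :|: setX [set o2; o3] [set o0; o3].
Definition unerased : {set 'I_5 * 'I_5} := (o4, o4) |: blocks.
Definition erasures : {set 'I_5 * 'I_5} := ~: unerased.

Lemma regular_erasures : regular 2 2 erasures.
Proof.
move=> U V.
have cardE (A : {set 'I_5}) : #|A| = (\sum_(i < 5) (i \in A))%N.
  by rewrite -sum1_card big_mkcond.
have -> : #|erasures :&: setX U V| =
    (\sum_(i < 5) \sum_(j < 5) [&& (i, j) \in erasures, i \in U & j \in V])%N.
  rewrite -sum1_card big_mkcond pair_big; apply: eq_bigr => -[i j] _.
  by rewrite in_setI in_setX; case: (_ && _).
under eq_bigr => i _ do under eq_bigr => j _ do rewrite !inE.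
rewrite !cardE !big_ord_recl !big_ord0 /=.
move: (_ \in U) (_ \in U) (_ \in U) (_ \in U) (_ \in U).
move: (_ \in V) (_ \in V) (_ \in V) (_ \in V) (_ \in V).
by do 10 case.
Qed.

Lemma outer_eq0_blocks (F : fieldType) (u v : 'rV[F]_5) :
  {in [set o0; o1], forall i, u 0 i = 0} \/
    {in [set o1; o2], forall j, v 0 j = 0} ->
  {in [set o2; o3], forall i, u 0 i = 0} \/
    {in [set o0; o3], forall j, v 0 j = 0} ->
  {in blocks, forall p, outer u v p = 0}.
Proof.
move=> uv1 uv2 p /setUP[pB|pB]; first exact: outer_eq0_setX uv1 p pB.
exact: outer_eq0_setX uv2 p pB.
Qed.

Lemma codeword_vanishing2 (F : fieldType) k (G : 'M[F]_(k, 5)) (a b : 'I_5) :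
  (2 < \rank G)%N ->
  exists u : 'rV_5,
    [/\ (u <= G)%MS, u != 0 & {in [set a; b], forall i, u 0 i = 0}].
Proof.
move=> rkG; apply: exists_codeword_vanishing; apply: leq_ltn_trans rkG.
by rewrite cards2; case: (_ != _).
Qed.

Section TensorCodeCorrectingErasures.
Variables (F : fieldType) (k1 k2 : nat).
Variables (G1 : 'M[F]_(k1, 5)) (G2 : 'M[F]_(k2, 5)).
Hypotheses (rkG1 : (2 < \rank G1)%N) (rkG2 : (2 < \rank G2)%N).
Hypothesis corrE : corrects (in_tensor_code G1 G2) erasures.

Lemma codeword_eq0 c :
  in_tensor_code G1 G2 c -> {in unerased, forall p, c p = 0} ->
  forall p, c p = 0.
Proof.
move=> codec cS.
apply: corrects_codeword_eq0 (in_tensor_code0 _ _) corrE codec _.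
by rewrite setCK.
Qed.

Lemma outer_eq0_on_unerased u v :
  (u <= G1)%MS -> (v <= G2)%MS -> {in unerased, forall p, outer u v p = 0} ->
  u = 0 \/ v = 0.
Proof.
move=> uG vG uvS; apply: outer_eq0.
exact: codeword_eq0 (in_tensor_code_outer uG vG) uvS.
Qed.

Lemma outer_corner_neq0 u v :
  (u <= G1)%MS -> (v <= G2)%MS -> u != 0 -> v != 0 ->
  {in blocks, forall p, outer u v p = 0} -> outer u v (o4, o4) != 0.
Proof.
move=> uG vG u_nz v_nz uvB; apply/eqP => uv44.
have uvS : {in unerased, forall p, outer u v p = 0}.
  by move=> p /setU1P[->|/uvB].
by case: (outer_eq0_on_unerased uG vG uvS); apply/eqP.
Qed.

Lemma corrects_erasures_absurd : False.
Proof.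
have [z [zG z_nz z0]] := codeword_vanishing2 o0 o1 rkG1.
have [u [uG u_nz u0]] := codeword_vanishing2 o2 o3 rkG1.
have [v [vG v_nz v0]] := codeword_vanishing2 o0 o3 rkG2.
have [w [wG w_nz w0]] := codeword_vanishing2 o1 o2 rkG2.
have [x [xG x_nz x0]] := codeword_vanishing2 o4 o4 rkG2.
have zvB := outer_eq0_blocks (or_introl z0) (or_intror v0).
have uwB := outer_eq0_blocks (or_intror w0) (or_introl u0).
have zv44 := outer_corner_neq0 zG vG z_nz v_nz zvB.
have uw44 := outer_corner_neq0 uG wG u_nz w_nz uwB.
set a := outer u w (o4, o4) in uw44; set b := outer z v (o4, o4) in zv44.
have c0 : forall p, a * outer z v p + (- b) * outer u w p = 0.
  apply: codeword_eq0.
    exact: in_tensor_code_comb (in_tensor_code_outer zG vG)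
                               (in_tensor_code_outer uG wG).
  move=> p /setU1P[->|pB]; first by rewrite -/a -/b mulNr mulrC subrr.
  by rewrite zvB // uwB // !mulr0 addr0.
have w4 : w 0 o4 != 0.
  by move: uw44; rewrite /a outerE mulf_eq0 negb_or => /andP[].
have u01 : {in [set o0; o1], forall i, u 0 i = 0}.
  move=> i iI; apply/eqP; have /eqP := c0 (i, o4).
  rewrite !outerE z0 // mul0r mulr0 add0r mulNr oppr_eq0 mulf_eq0 (negbTE zv44).
  by rewrite mulf_eq0 (negbTE w4) orbF.
have uxS : {in unerased, forall p, outer u x p = 0}.
  move=> p /setU1P[->|pB]; first by rewrite outerE x0 ?mulr0 // set21.
  exact: outer_eq0_blocks (or_introl u01) (or_introl u0) p pB.
by case: (outer_eq0_on_unerased uG xG uxS); apply/eqP.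
Qed.

End TensorCodeCorrectingErasures.

Lemma not_correctable_erasures : ~ correctable 2 2 erasures.
Proof.
move=> [F [k1 [k2 [G1 [G2 [rkG1 [rkG2 corrE]]]]]]].
exact: corrects_erasures_absurd rkG1 rkG2 corrE.
Qed.

Theorem theorem3 :
  ~ (forall (m n a b : nat), (a < m)%N -> (b < n)%N ->
       forall E : {set 'I_m * 'I_n}, correctable a b E <-> regular a b E).
Proof.
move=> correctable_iff_regular; apply: not_correctable_erasures.
apply/(correctable_iff_regular 5 5 2 2 isT isT erasures).
exact: regular_erasures.
Qed.
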